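(* Let $x_i(t)\ge 0$ ($i,t\in[n]$) satisfy $\sum_{i\in[n]}x_i(t)\le 1$ for all $t\in[n]$, and let $\alpha_i$ be the arrival times produced by Discrete-Time Poisson Rounding from $x$. For any positive integer thresholds $(\theta_i)_{i\in[n]}$, $$\Pr\big[\forall i\in[n],\ \alpha_i>2\theta_i\big]\le\exp\Big(-2\sum_{i\in[n]}\sum_{\tau\in[\theta_i]}\bar x_i(\tau)\Big).$$
   Context: Here $[m]=\{1,\dots,m\}$ and $\bar x_i(t)=\frac1t\sum_{t'=1}^{\min\{t,n\}}x_i(t')$ for positive integers $t$ (so $\sum_i\bar x_i(t)\le 1$). Discrete-Time Poisson Rounding: independently at each step $\tau=1,2,\dots$, sample exactly one box $i\in[n]$ with probability $\bar x_i(\lceil\tau/2\rceil)$, or no box with the remaining probability $1-\sum_i\bar x_i(\lceil\tau/2\rceil)$. The arrival time $\alpha_i$ of box $i$ is the first step at which it is sampled ($\infty$ if never). *)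

From HB Require Import structures.
From mathcomp Require Import all_boot all_order all_algebra.
From mathcomp Require Import reals.
From mathcomp.analysis Require Import sequences exp.
Set Implicit Arguments. Unset Strict Implicit. Unset Printing Implicit Defensive.
Import Order.TTheory GRing.Theory Num.Theory.
Local Open Scope ring_scope.

(* x i t is x_i(t); only t in 1..n is meaningful. *)
Definition xbar {R : realType} {n : nat} (x : 'I_n -> nat -> R) (i : 'I_n) (t : nat) : R :=
  (t%:R)^-1 * \sum_(1 <= t' < (minn t n).+1) x i t'.

Definition step_prob {R : realType} {n : nat} (x : 'I_n -> nat -> R) (tau : nat)
  (o : option 'I_n) : R :=
  match o with
  | Some i => xbar x i (uphalf tau)
  | None => 1 - \sum_(i < n) xbar x i (uphalf tau)
  end.

(* Outcomes of the first T steps: omega k is the result of step tau = k+1.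
   Steps are independent, so the law of the first T steps is the product. *)
Definition traj_prob {R : realType} {n T : nat} (x : 'I_n -> nat -> R)
  (w : {ffun 'I_T -> option 'I_n}) : R :=
  \prod_(k < T) step_prob x k.+1 (w k).

(* Arrival time of box i observed within the first T steps:
   Some tau = first step tau (1-based) at which i is sampled; None = not
   sampled in steps 1..T, i.e. alpha_i > T. *)
Definition arrival {n T : nat} (w : {ffun 'I_T -> option 'I_n}) (i : 'I_n) : option nat :=
  let s := [seq k <- enum 'I_T | w k == Some i] in
  match s with
  | [::] => None
  | k :: _ => Some (nat_of_ord k).+1
  end.

(* alpha > b, where None means alpha > T (>= b under the theorem's hypothesis). *)
Definition arrival_gt (a : option nat) (b : nat) : bool :=
  match a with None => true | Some t => (b < t)%N end.

Definition prob_all_late {R : realType} {n T : nat} (x : 'I_n -> nat -> R)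
  (theta : 'I_n -> nat) : R :=
  \sum_(w : {ffun 'I_T -> option 'I_n} | [forall i, arrival_gt (arrival w i) (2 * theta i)])
     traj_prob x w.

(* The event "every box i arrives after step 2 theta_i" only constrains each step separately: at
   step k, no box i with k <= 2 theta_i may be sampled.  Since the steps are independent, its
   probability is the product over k of 1 - a_k, where a_k is the total sampling probability of
   these forbidden boxes, and 1 - a_k <= exp (- a_k).  Box i is forbidden at steps 1 .. 2 theta_i,
   which sample it with probabilities xbar_i(1), xbar_i(1), ..., xbar_i(theta_i), xbar_i(theta_i),
   so the exponents add up to 2 sum_i sum_(tau <= theta_i) xbar_i(tau). *)
From mathcomp Require Import all_boot all_order all_algebra.
From mathcomp Require Import reals.
From mathcomp.analysis Require Import sequences exp.
Set Implicit Arguments.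
Unset Strict Implicit.
Unset Printing Implicit Defensive.
Import Order.TTheory GRing.Theory Num.Theory.
Local Open Scope ring_scope.

Lemma big_option (R : nmodType) (T : finType) (F : option T -> R) :
  \sum_o F o = F None + \sum_i F (Some i).
Proof.
rewrite (bigD1 None) //=; congr (_ + _).
rewrite (reindex_omap Some id) /=; last by case.
by apply: eq_bigl => i; rewrite eqxx.
Qed.

Lemma sum_uphalf_double (R : nmodType) (F : nat -> R) (m : nat) :
  \sum_(0 <= k < 2 * m) F (uphalf k.+1) = (\sum_(1 <= t < m.+1) F t) *+ 2.
Proof.
elim: m => [|m IHm]; first by rewrite muln0 !big_geq // mul0rn.
have up_odd : uphalf (2 * m).+1 = m.+1 by rewrite /= mul2n doubleK.
have up_even : uphalf (2 * m).+2 = m.+1 by rewrite -addn2 -mulnSr mul2n uphalf_double.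
rewrite mulnS add2n big_nat_recr // big_nat_recr // up_odd up_even IHm.
rewrite [in RHS]big_nat_recr //=.
by rewrite mulrnDl mulr2n addrA.
Qed.

Lemma arrival_gtP (n T : nat) (w : {ffun 'I_T -> option 'I_n}) (i : 'I_n) (b : nat) :
  arrival_gt (arrival w i) b = [forall k : 'I_T, (w k == Some i) ==> (b < k.+1)%N].
Proof.
rewrite /arrival; set s := [seq k <- enum 'I_T | w k == Some i].
have mem_s k : (k \in s) = (w k == Some i) by rewrite mem_filter mem_enum andbT.
have ltn_ord_trans : transitive (relpre (@nat_of_ord T) ltn).
  by move=> ? ? ? /= /ltn_trans; apply.
have s_sorted : sorted (relpre (@nat_of_ord T) ltn) s.
  by apply: sorted_filter => //; rewrite -sorted_map val_enum_ord iota_ltn_sorted.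
case: s mem_s s_sorted => [|k0 r] mem_s s_sorted /=.
  by apply/esym/forallP => k; rewrite -mem_s.
apply/idP/forallP => [b_lt_k0 k | /(_ k0)]; last by rewrite -mem_s mem_head.
rewrite -mem_s inE; apply/implyP => /orP[/eqP -> // | k_r].
have /allP/(_ k k_r) := order_path_min ltn_ord_trans s_sorted.
by move=> /= /ltnW; apply: leq_trans.
Qed.

Section PoissonRounding.

Variables (R : realType) (n : nat) (x : 'I_n -> nat -> R).

Lemma xbar_ge0 : (forall i t, (1 <= t <= n)%N -> 0 <= x i t) -> forall i t, 0 <= xbar x i t.
Proof.
move=> x_ge0 i t; rewrite /xbar mulr_ge0 ?invr_ge0 ?ler0n // big_nat_cond.
apply: sumr_ge0 => t' /andP[/andP[t'_gt0 t'_le] _]; apply: x_ge0.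
by rewrite t'_gt0 (leq_trans _ (geq_minr t n)).
Qed.

Lemma sum_xbar_le1 : (forall t, (1 <= t <= n)%N -> \sum_i x i t <= 1) ->
  forall t, (0 < t)%N -> \sum_i xbar x i t <= 1.
Proof.
move=> x_le1 t t_gt0; rewrite /xbar -mulr_sumr exchange_big /=.
have sum_le : \sum_(1 <= t' < (minn t n).+1) \sum_i x i t' <= t%:R.
  apply: le_trans (_ : \sum_(1 <= t' < (minn t n).+1) 1 <= _).
    rewrite big_nat_cond [leRHS]big_nat_cond.
    apply: ler_sum => t' /andP[/andP[t'_gt0 t'_le] _].
    by apply: x_le1; rewrite t'_gt0 (leq_trans _ (geq_minr t n)).
  by rewrite sumr_const_nat subn1 ler_nat geq_minl.
by rewrite ler_pdivrMl ?ltr0n // mulr1.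
Qed.

Variable theta : 'I_n -> nat.

Definition late_at (k : nat) (o : option 'I_n) : bool :=
  if o is Some i then (2 * theta i < k)%N else true.

Definition forbidden_mass (k : nat) : R :=
  \sum_(i | (k <= 2 * theta i)%N) xbar x i (uphalf k).

Lemma all_late_atE (T : nat) (w : {ffun 'I_T -> option 'I_n}) :
  [forall i, arrival_gt (arrival w i) (2 * theta i)] = [forall k : 'I_T, late_at k.+1 (w k)].
Proof.
apply/forallP/forallP => [late_w k | late_w i].
  case E: (w k) => [i|] //=.
  by move/(_ i): late_w; rewrite arrival_gtP => /forallP/(_ k); rewrite E eqxx.
rewrite arrival_gtP; apply/forallP => k; apply/implyP => /eqP E.
by move/(_ k): late_w; rewrite E.
Qed.

Lemma sum_late_step_prob (k : nat) :
  \sum_(o | late_at k o) step_prob x k o = 1 - forbidden_mass k.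
Proof.
rewrite big_mkcond big_option /= /forbidden_mass.
rewrite [\sum_i xbar _ _ _](bigID (fun i => (k <= 2 * theta i)%N)) /=.
rewrite [\sum_i _](bigID (fun i => (k <= 2 * theta i)%N)) /=.
rewrite [\sum_(i | _) (if _ then _ else _)]big1 => [|i k_le]; last by rewrite ltnNge k_le.
rewrite add0r [\sum_(i | _) (if _ then _ else _)](eq_bigr (fun i => xbar x i (uphalf k))).
  by rewrite opprD addrA subrK.
by move=> i k_gt; rewrite ltnNge k_gt.
Qed.

Lemma prob_all_late_prod (T : nat) :
  @prob_all_late R n T x theta = \prod_(k < T) (1 - forbidden_mass k.+1).
Proof.
under eq_bigr do rewrite -sum_late_step_prob.
rewrite bigA_distr_big_dep; apply: eq_big => [w | w _] //.
by rewrite all_late_atE; apply/forallP/familyP.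
Qed.

Lemma sum_forbidden_mass (T : nat) : (forall i, (2 * theta i <= T)%N) ->
  \sum_(k < T) forbidden_mass k.+1 = 2 * \sum_i \sum_(1 <= tau < (theta i).+1) xbar x i tau.
Proof.
move=> theta_le_T; rewrite /forbidden_mass (exchange_big_dep xpredT) // mulr_sumr.
apply: eq_bigr => i _; rewrite mulr_natl -sum_uphalf_double big_mkord.
by rewrite (big_ord_widen T (fun k => xbar x i (uphalf k.+1)) (theta_le_T i)).
Qed.

End PoissonRounding.

Lemma prod_1B_le_expR (R : realType) (I : finType) (a : I -> R) :
  (forall i, a i <= 1) -> \prod_i (1 - a i) <= expR (- \sum_i a i).
Proof.
move=> a_le1; rewrite -sumrN expR_sum; apply: ler_prod => i _.
by rewrite subr_ge0 a_le1 expR_ge1Dx.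
Qed.

Theorem lemma3p5 (R : realType) (n : nat) (x : 'I_n -> nat -> R)
  (hx0 : forall (i : 'I_n) (t : nat), (1 <= t <= n)%N -> 0 <= x i t)
  (hx1 : forall t : nat, (1 <= t <= n)%N -> \sum_(i < n) x i t <= 1)
  (theta : 'I_n -> nat) (htheta : forall i, (0 < theta i)%N)
  (T : nat) (hT : forall i, (2 * theta i <= T)%N) :
  @prob_all_late R n T x theta
    <= expR (- (2 * \sum_(i < n) \sum_(1 <= tau < (theta i).+1) xbar x i tau)).
Proof.
rewrite prob_all_late_prod -(sum_forbidden_mass x hT).
apply: prod_1B_le_expR => k.
apply: le_trans (sum_xbar_le1 hx1 (isT : (0 < uphalf k.+1)%N)).
rewrite /forbidden_mass [leRHS](bigID (fun i => (k.+1 <= 2 * theta i)%N)) /= lerDl.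
by apply: sumr_ge0 => i _; apply: xbar_ge0.
Qed.
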